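(* For $k\in\mathbb{Z}_{\geq 0}$ let $!k=k!\sum_{\ell=0}^{k}\frac{(-1)^{\ell}}{\ell!}$ denote the $k$-th derangement number. Consider the formal series $$S_{\gamma}=\sum_{k=1}^{\infty}\frac{(-1)^{k}\,(!k)}{k},\qquad S_{\delta}=\sum_{k=1}^{\infty}(-1)^{k-1}(k-1)!,$$ and, for $\alpha\in\mathbb{R}$, the formal series $S(\alpha)=S_{\gamma}+\alpha S_{\delta}$, i.e. the series $\sum_{k=1}^{\infty}\left[\frac{(-1)^{k}\,(!k)}{k}+\alpha(-1)^{k-1}(k-1)!\right]$. Then $S(\alpha)$ is a conventionally convergent series if and only if $\alpha=1/e$.
   Context: Both $S_{\gamma}$ and $S_{\delta}$ are divergent series (in the conventional sense); they are Borel-summable to the Euler–Mascheroni constant $\gamma$ and the Euler–Gompertz constant $\delta=\int_0^\infty e^{-t}/(t+1)\,dt$, respectively. ''Conventionally convergent'' means convergent as an ordinary series of real numbers (convergence of the sequence of partial sums), with the linear combination $S_\gamma+\alpha S_\delta$ formed term by term. *)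

From Stdlib Require Import Reals.
From Coquelicot Require Import Coquelicot.
Open Scope R_scope.

Definition derangement (k : nat) : R :=
  INR (Factorial.fact k) * sum_f_R0 (fun l => (-1) ^ l / INR (Factorial.fact l)) k.

Definition s_gamma_term (k : nat) : R := (-1) ^ k * derangement k / INR k.

Definition s_delta_term (k : nat) : R := (-1) ^ (k - 1) * INR (Factorial.fact (k - 1)).

(* term-by-term combination S(alpha) = S_gamma + alpha S_delta, reindexed so
   that index n corresponds to k = n+1 *)
Definition S_alpha_term (alpha : R) (n : nat) : R :=
  s_gamma_term (S n) + alpha * s_delta_term (S n).

(* Writing [e_k] for the k-th partial sum of the series of [exp (-1)], the
   combined term is [(-1)^k (k-1)! (e_k - alpha)], since [!k = k! e_k].  If
   [alpha <> 1/e], the factorial keeps the terms away from 0 and the series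
   diverges.  If [alpha = 1/e], the alternating series estimate
   [|e_k - 1/e| <= 1/(k+1)!] bounds the k-th term by [1/(k (k+1))], which is
   summable by telescoping. *)

From Stdlib Require Import Reals Lra Lia.
From Coquelicot Require Import Coquelicot.
Open Scope R_scope.

Lemma alternated_series_remainder (u : nat -> R) (l : R) :
  Un_decreasing u -> Un_cv u 0 -> Un_cv (sum_f_R0 (tg_alt u)) l ->
  forall n, Rabs (sum_f_R0 (tg_alt u) n - l) <= u (S n).
Proof.
  intros u_decr u_cv0 sum_cv n.
  assert (next_term : forall k,
    sum_f_R0 (tg_alt u) (S k) = sum_f_R0 (tg_alt u) k + (-1) ^ S k * u (S k))
    by reflexivity.
  destruct (Nat.Even_or_Odd n) as [[N ->] | [N ->]].
  - destruct (alternated_series_ineq u l N u_decr u_cv0 sum_cv) as [lower upper].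
    rewrite next_term, pow_1_odd in lower.
    rewrite Rabs_right; lra.
  - destruct (alternated_series_ineq u l N u_decr u_cv0 sum_cv) as [lower _].
    destruct (alternated_series_ineq u l (S N) u_decr u_cv0 sum_cv) as [_ upper].
    replace (2 * S N)%nat with (S (2 * N + 1)) in upper by lia.
    rewrite next_term in upper.
    replace ((-1) ^ S (2 * N + 1)) with 1 in upper
      by (replace (S (2 * N + 1)) with (2 * (N + 1))%nat by lia; now rewrite pow_1_even).
    replace (S (2 * N)) with (2 * N + 1)%nat in lower by lia.
    rewrite Rabs_left1; lra.
Qed.

Lemma is_series_telescoping (u : nat -> R) (l : R) :
  is_lim_seq u l -> is_series (fun n => u n - u (S n)) (u O - l).
Proof.
  intros u_cv.
  assert (partial_sum : forall n, sum_n (fun k => u k - u (S k)) n = u O - u (S n)).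
  { induction n as [|n IH].
    - now rewrite sum_O.
    - rewrite sum_Sn, IH. change plus with Rplus; lra. }
  change (is_lim_seq (sum_n (fun n => u n - u (S n))) (u O - l)).
  apply (is_lim_seq_ext (fun n => u O - u (S n))).
  - intros n. now rewrite partial_sum.
  - apply (is_lim_seq_minus' _ _ (u O) l).
    + apply is_lim_seq_const.
    + now apply is_lim_seq_incr_1 in u_cv.
Qed.

Lemma ex_series_inv_consecutive_product :
  ex_series (fun n => / ((INR n + 1) * (INR n + 2))).
Proof.
  assert (inv_succ_cv0 : is_lim_seq (fun n => / INR (S n)) 0).
  { replace (Finite 0) with (Rbar_inv p_infty) by reflexivity.
    apply is_lim_seq_inv; [|discriminate].
    apply (is_lim_seq_incr_1 INR), is_lim_seq_INR. }
  assert (partial_fractions : forall n,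
    / INR (S n) - / INR (S (S n)) = / ((INR n + 1) * (INR n + 2))).
  { intros n. rewrite !S_INR.
    assert (0 <= INR n) by apply pos_INR.
    field. lra. }
  eexists.
  exact (is_series_ext _ _ _ partial_fractions (is_series_telescoping _ _ inv_succ_cv0)).
Qed.

Definition exp_neg1_partial_sum (k : nat) : R :=
  sum_f_R0 (fun l => (-1) ^ l / INR (Factorial.fact l)) k.

Lemma exp_neg1_partial_sum_alt (k : nat) :
  exp_neg1_partial_sum k = sum_f_R0 (tg_alt (fun l => / INR (Factorial.fact l))) k.
Proof. apply sum_eq. intros l _. unfold tg_alt, Rdiv. ring. Qed.

Lemma exp_neg1_partial_sum_cv : Un_cv exp_neg1_partial_sum (/ exp 1).
Proof.
  rewrite <- exp_Ropp, <- is_lim_seq_Reals.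
  apply (is_lim_seq_ext (sum_n (fun l => scal ((- (1)) ^ l) (/ INR (Factorial.fact l))))).
  - intros k. rewrite sum_n_Reals. apply sum_eq. intros l _.
    replace (- (1)) with (-1) by ring. reflexivity.
  - exact (is_exp_Reals (- (1))).
Qed.

Lemma inv_fact_decreasing : Un_decreasing (fun l => / INR (Factorial.fact l)).
Proof.
  intros l. apply Rinv_le_contravar; [apply INR_fact_lt_0|].
  apply le_INR, Factorial.fact_le. lia.
Qed.

Lemma inv_fact_cv0 : Un_cv (fun l => / INR (Factorial.fact l)) 0.
Proof.
  intros eps eps_pos. destruct (cv_speed_pow_fact 1 eps eps_pos) as [N HN].
  exists N. intros n Hn. specialize (HN n Hn).
  now rewrite pow1, Rdiv_1_l in HN.
Qed.

Lemma exp_neg1_partial_sum_remainder (k : nat) :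
  Rabs (exp_neg1_partial_sum k - / exp 1) <= / INR (Factorial.fact (S k)).
Proof.
  rewrite exp_neg1_partial_sum_alt.
  apply alternated_series_remainder.
  - exact inv_fact_decreasing.
  - exact inv_fact_cv0.
  - intros eps eps_pos. destruct (exp_neg1_partial_sum_cv eps eps_pos) as [N HN].
    exists N. intros n Hn. rewrite <- exp_neg1_partial_sum_alt. now apply HN.
Qed.

Lemma S_alpha_term_eq (alpha : R) (n : nat) :
  S_alpha_term alpha n =
  (-1) ^ S n * INR (Factorial.fact n) * (exp_neg1_partial_sum (S n) - alpha).
Proof.
  unfold S_alpha_term, s_gamma_term, s_delta_term, derangement.
  fold (exp_neg1_partial_sum (S n)).
  replace (S n - 1)%nat with n by lia.
  rewrite fact_simpl, mult_INR. simpl pow.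
  assert (INR (S n) <> 0) by (apply not_0_INR; lia).
  field. assumption.
Qed.

Lemma Rabs_S_alpha_term (alpha : R) (n : nat) :
  Rabs (S_alpha_term alpha n) =
  INR (Factorial.fact n) * Rabs (exp_neg1_partial_sum (S n) - alpha).
Proof.
  rewrite S_alpha_term_eq, !Rabs_mult, pow_1_abs, Rabs_right.
  - ring.
  - apply Rle_ge, pos_INR.
Qed.

Lemma ex_series_S_alpha_term_inv_e : ex_series (S_alpha_term (/ exp 1)).
Proof.
  apply (@ex_series_le R_AbsRing R_CompleteNormedModule)
    with (2 := ex_series_inv_consecutive_product).
  intros n. change norm with Rabs. simpl. rewrite Rabs_S_alpha_term.
  apply Rle_trans with (INR (Factorial.fact n) * / INR (Factorial.fact (S (S n)))).
  - apply Rmult_le_compat_l; [apply pos_INR | apply exp_neg1_partial_sum_remainder].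
  - rewrite !fact_simpl, !mult_INR, !S_INR.
    assert (0 < INR (Factorial.fact n)) by apply INR_fact_lt_0.
    assert (0 <= INR n) by apply pos_INR.
    right. field. lra.
Qed.

Lemma ex_series_S_alpha_term_eq_inv_e (alpha : R) :
  ex_series (S_alpha_term alpha) -> alpha = / exp 1.
Proof.
  intros summable.
  assert (terms_cv0 : is_lim_seq (fun n => Rabs (S_alpha_term alpha n)) 0)
    by apply (is_lim_seq_abs_0 (S_alpha_term alpha)), ex_series_lim_0, summable.
  assert (gap_cv0 : is_lim_seq (fun n => exp_neg1_partial_sum (S n) - alpha) 0).
  { apply is_lim_seq_abs_0.
    apply (is_lim_seq_le_le (fun _ => 0) _ _ _)
      with (2 := is_lim_seq_const 0) (3 := terms_cv0).
    intros n. split; [apply Rabs_pos|].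
    rewrite Rabs_S_alpha_term, <- (Rmult_1_l (Rabs _)) at 1.
    apply Rmult_le_compat_r; [apply Rabs_pos|].
    apply (le_INR 1), Factorial.lt_O_fact. }
  assert (gap_cv : is_lim_seq (fun n => exp_neg1_partial_sum (S n) - alpha)
                              (/ exp 1 - alpha)).
  { apply (is_lim_seq_minus' _ _ (/ exp 1) alpha); [|apply is_lim_seq_const].
    apply (is_lim_seq_incr_1 exp_neg1_partial_sum), is_lim_seq_Reals.
    exact exp_neg1_partial_sum_cv. }
  assert (Finite (/ exp 1 - alpha) = Finite 0) as gap_zero
    by now rewrite <- (is_lim_seq_unique _ _ gap_cv), (is_lim_seq_unique _ _ gap_cv0).
  injection gap_zero. lra.
Qed.

Theorem proposition1 (alpha : R) :
  ex_series (S_alpha_term alpha) <-> alpha = / exp 1.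
Proof.
  split.
  - apply ex_series_S_alpha_term_eq_inv_e.
  - intros ->. exact ex_series_S_alpha_term_inv_e.
Qed.
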